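(* There exists a sum game instance $\mathcal R=(\mathbf N,G,\mathcal P)$ that has no Nash-routing.
   Context: A routing game $(\mathbf N,G,\mathcal P)$: players $\{1,\dots,N\}$, a finite graph $G$, and for each player $i$ a nonempty finite set $\mathcal P_i$ of paths from a source $u_i$ to a destination $v_i$. A routing is $\mathbf p=[p_1,\dots,p_N]$, $p_i\in\mathcal P_i$. $C_e(\mathbf p)$ = number of players whose path uses edge $e$; $C_i(\mathbf p)=\max_{e\in p_i}C_e(\mathbf p)$; $D_i(\mathbf p)=|p_i|$ (number of edges). A sum game has player cost $pc_i(\mathbf p)=C_i(\mathbf p)+D_i(\mathbf p)$ (and social cost $C(\mathbf p)+D(\mathbf p)$, where $C=\max_eC_e$, $D=\max_i|p_i|$). A Nash-routing is a routing $\mathbf p$ with $pc_i(\mathbf p)\le pc_i(p_i';\mathbf p_{-i})$ for every player $i$ and every $p_i'\in\mathcal P_i$, where $(p_i';\mathbf p_{-i})$ replaces $p_i$ by $p_i'$. *)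

From mathcomp Require Import all_boot.
Set Implicit Arguments. Unset Strict Implicit. Unset Printing Implicit Defensive.

Section RoutingGame.
Variable V : finType.
Variable e : rel V.            (* adjacency relation of G (undirected: symmetric, irreflexive) *)

(* A path is given by its sequence of vertices.  [is_upath u v p] : p is a
   simple path in G from u to v. *)
Definition is_upath (u v : V) (p : seq V) : bool :=
  if p is x :: s then [&& x == u, path e x s, last x s == v & uniq p] else false.

(* The edges of a path; an undirected edge {x,y} is represented by the set [set x; y]. *)
Definition pedges (p : seq V) : seq {set V} :=
  [seq [set xy.1; xy.2] | xy <- zip p (behead p)].

Definition plen (p : seq V) : nat := size (pedges p).

Variable N : nat.

Definition routing := 'I_N -> seq V.

Definition edge_cong (r : routing) (f : {set V}) : nat :=
  #|[set i : 'I_N | f \in pedges (r i)]|.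

Definition player_cong (r : routing) (i : 'I_N) : nat :=
  \max_(f <- pedges (r i)) edge_cong r f.

Definition pc_sum (r : routing) (i : 'I_N) : nat :=
  player_cong r i + plen (r i).

Definition deviate (r : routing) (i : 'I_N) (q : seq V) : routing :=
  fun j => if j == i then q else r j.

Definition is_routing (P : 'I_N -> seq (seq V)) (r : routing) : Prop :=
  forall i, r i \in P i.

Definition sum_nash (P : 'I_N -> seq (seq V)) (r : routing) : Prop :=
  is_routing P r /\
  forall (i : 'I_N) (q : seq V), q \in P i -> pc_sum r i <= pc_sum (deviate r i q) i.

Definition wf_game (src dst : 'I_N -> V) (P : 'I_N -> seq (seq V)) : Prop :=
  symmetric e /\ irreflexive e /\
  forall i, P i != [::] /\ all (is_upath (src i) (dst i)) (P i).

End RoutingGame.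

(* On a graph with 30 vertices, three
   "deciding" players 0, 1, 2 each choose between two routes, while seven
   further players have a single one-edge route and only create congestion
   (one player on edge {0,5}, four on {2,7}, two on {3,8}).  Each of the
   2 * 2 * 2 strategy profiles admits a player with a strictly cheaper
   alternative route, so no routing is a Nash-routing. *)

From mathcomp Require Import all_boot zmodp.
Set Implicit Arguments. Unset Strict Implicit. Unset Printing Implicit Defensive.

(* Unlike [enum 'I_n], whose
   definition goes through an opaque reflection lemma, this list evaluates
   by computation, so it is used wherever players are enumerated. *)
Fixpoint ords (n : nat) : seq 'I_n :=
  if n is m.+1 then ord0 :: map (lift ord0) (ords m) else [::].

Lemma ordsE n : ords n = enum 'I_n.
Proof. by elim: n => [|n IH]; rewrite ?enum_ord0 // enum_ordSl /= IH. Qed.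

Section Cost.
Variables (V : finType) (N : nat).
Implicit Types (r : routing V N) (q : seq V) (a b : V).

Definition steps q : seq (V * V) := zip q (behead q).

Definition same_edge a b (xy : V * V) : bool :=
  ((a == xy.1) && (b == xy.2)) || ((a == xy.2) && (b == xy.1)).

Lemma set2_eqE a b (xy : V * V) :
  ([set a; b] == [set xy.1; xy.2]) = same_edge a b xy.
Proof.
case: xy => c d /=; apply/eqP/idP => [E|]; last first.
  by case/orP=> /andP[/eqP-> /eqP->] //; rewrite setUC.
have /set2P[] : a \in [set c; d] by rewrite -E set21.
all: have /set2P[] : b \in [set c; d] by rewrite -E set22.
all: have /set2P[] : c \in [set a; b] by rewrite E set21.
all: have /set2P[] : d \in [set a; b] by rewrite E set22.
all: by move=> *; subst; rewrite /same_edge /= !eqxx ?orbT.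
Qed.

Definition uses q a b : bool := has (same_edge a b) (steps q).

Lemma mem_pedges q a b : ([set a; b] \in pedges q) = uses q a b.
Proof.
rewrite /pedges /uses /steps; elim: (zip q (behead q)) => [|xy s IH] //=.
by rewrite in_cons IH set2_eqE.
Qed.

Definition edge_load r a b : nat := count (fun j => uses (r j) a b) (ords N).

Lemma edge_congE r a b : edge_cong r [set a; b] = edge_load r a b.
Proof.
rewrite /edge_cong /edge_load ordsE cardE {1}/enum_mem -enumT size_filter.
by apply: eq_count => j; rewrite !inE mem_pedges.
Qed.

Definition cost r (i : 'I_N) : nat :=
  foldr maxn 0 [seq edge_load r xy.1 xy.2 | xy <- steps (r i)] + size (steps (r i)).

Lemma pc_sumE r i : pc_sum r i = cost r i.
Proof.
rewrite /pc_sum /player_cong /plen /cost /pedges size_map big_map foldrE big_map.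
by congr (_ + _); apply: eq_bigr => xy _; rewrite edge_congE.
Qed.

End Cost.

Section Profiles.
Variables (V : finType) (N : nat).
Implicit Types (r : routing V N) (P : 'I_N -> seq (seq V)).

Lemma pc_sum_ext r r' : r =1 r' -> pc_sum r =1 pc_sum r'.
Proof.
move=> rr' i; have cong_ext f : edge_cong r f = edge_cong r' f.
  by apply: eq_card => j; rewrite !inE rr'.
by rewrite /pc_sum /player_cong rr'; congr (_ + _); apply: eq_bigr.
Qed.

Lemma deviate_ext r r' i q : r =1 r' -> deviate r i q =1 deviate r' i q.
Proof. by move=> rr' j; rewrite /deviate rr'. Qed.

Definition improvable P r : bool :=
  has (fun i => has (fun q => cost (deviate r i q) i < cost r i) (P i)) (ords N).

Lemma improvable_not_nash P r r' : r =1 r' -> improvable P r' -> ~ sum_nash P r.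
Proof.
move=> rr' /hasP[i _ /hasP[q qP better]] [_ /(_ i q qP)].
by rewrite (pc_sum_ext rr') (pc_sum_ext (deviate_ext i q rr')) !pc_sumE leqNgt better.
Qed.

Definition profiles (T : Type) (L : seq (seq T)) : seq (seq T) :=
  foldr (fun ps acc => [seq p :: s | p <- ps, s <- acc]) [:: [::]] L.

Lemma mem_profiles (T : eqType) (L : seq (seq T)) (s : seq T) :
  all2 (fun x ps => x \in ps) s L -> s \in profiles L.
Proof.
elim: L s => [|ps L IH] [|x s] //= /andP[xps sL].
exact: allpairs_f xps (IH s sL).
Qed.

Definition routing_of (s : seq (seq V)) : routing V N := fun i => nth [::] s i.

Lemma routing_profile P r : is_routing P r ->
  exists2 s, s \in profiles (map P (ords N)) & r =1 routing_of s.
Proof.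
move=> rP; rewrite ordsE; exists (map r (enum 'I_N)).
  by apply: mem_profiles; elim: (enum 'I_N) => //= i s ->; rewrite rP.
by move=> i; rewrite /routing_of (nth_map i) ?size_enum_ord // nth_ord_enum.
Qed.

Theorem no_nash_of_profiles P :
  all (fun s => improvable P (routing_of s)) (profiles (map P (ords N))) ->
  ~ exists r, sum_nash P r.
Proof.
move=> allimp [r nash]; have [s sP rs] := routing_profile nash.1.
exact: improvable_not_nash rs (allP allimp s sP) nash.
Qed.

End Profiles.

(* Vertices 10, 11, 12 are the sources and 13, 14, 15 the
   destinations of the deciding players; the chains 17..23 and 24..29 are
   long detours available to players 1 and 2.  Vertex numbers are converted
   with [inZp] (reduction modulo 30), which evaluates by computation. *)
Definition vertex := 'I_30.

Definition edge_list : seq (nat * nat) :=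
  [:: (0, 5); (0, 10); (0, 11); (0, 12); (1, 5); (1, 6); (1, 12); (1, 16);
      (2, 7); (2, 10); (3, 5); (3, 6); (3, 7); (3, 8); (4, 6); (4, 8); (4, 9);
      (4, 11); (5, 16); (6, 24); (8, 13); (8, 14); (9, 13); (9, 15); (9, 17);
      (14, 23); (15, 29); (17, 18); (18, 19); (19, 20); (20, 21); (21, 22);
      (22, 23); (24, 25); (25, 26); (26, 27); (27, 28); (28, 29)].

Definition adj : rel vertex :=
  fun x y => ((val x, val y) \in edge_list) || ((val y, val x) \in edge_list).

Definition route_table : seq (seq (seq nat)) :=
  [:: [:: [:: 10; 0; 5; 1; 6; 4; 9; 13]; [:: 10; 2; 7; 3; 8; 13]];
      [:: [:: 11; 4; 9; 17; 18; 19; 20; 21; 22; 23; 14];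
          [:: 11; 0; 5; 16; 1; 6; 3; 8; 14]];
      [:: [:: 12; 0; 5; 3; 8; 4; 9; 15]; [:: 12; 1; 6; 24; 25; 26; 27; 28; 29; 15]];
      [:: [:: 0; 5]]; [:: [:: 2; 7]]; [:: [:: 2; 7]]; [:: [:: 2; 7]]; [:: [:: 2; 7]];
      [:: [:: 3; 8]]; [:: [:: 3; 8]]].

Definition strategies (i : 'I_10) : seq (seq vertex) :=
  [seq map inZp p | p <- nth [::] route_table i].

Definition source (i : 'I_10) : vertex :=
  inZp (nth 0 [:: 10; 11; 12; 0; 2; 2; 2; 2; 3; 3] i).

Definition target (i : 'I_10) : vertex :=
  inZp (nth 0 [:: 13; 14; 15; 5; 7; 7; 7; 7; 8; 8] i).

Lemma instance_wf : wf_game adj source target strategies.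
Proof.
split; first by move=> x y; rewrite /adj orbC.
split.
  have loopless : all (fun xy => xy.1 != xy.2) edge_list by [].
  by move=> x; rewrite /adj orbb; apply/negP => /(allP loopless); rewrite eqxx.
have routes_ok : all (fun i => (strategies i != [::]) &&
    all (is_upath adj (source i) (target i)) (strategies i)) (ords 10).
  by vm_compute.
by move=> i; apply/andP/(allP routes_ok); rewrite ordsE mem_enum.
Qed.

Theorem mainTheorem8 :
  exists (V : finType) (e : rel V) (N : nat) (src dst : 'I_N -> V)
         (P : 'I_N -> seq (seq V)),
    wf_game e src dst P /\ ~ (exists r : routing V N, sum_nash P r).
Proof.
exists vertex, adj, 10, source, target, strategies; split; first exact: instance_wf.
by apply: no_nash_of_profiles; vm_compute.
Qed.
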